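(* Consider the dissemination stage described in the context on a connected non-bipartite graph, with $N$ large enough that $g(N)>\ln N$. If each agent sets off $hg(N)$ MHRW tokens, then with probability at least $1-\frac{1}{N^{h/3}}$ all these walks complete their $L$ steps, and hence reach the $\frac1{N^3}$-nearly uniform distribution $[\frac1N-\frac1{N^3},\frac1N+\frac1{N^3}]$ over agents, within $O(\log^2N)$ slots.
   Context: $\mathcal G=(\mathcal N,\mathcal E)$ is a connected, non-bipartite undirected graph on agents $\mathcal N=\{1,\dots,N\}$; $\mathcal N_i$ is the neighbor set of $i$, $N_i=|\mathcal N_i|$. The function $g:\mathbb N^+\to\mathbb R$ satisfies: for every real $\ell>0$, $g(N)>\ell\ln N$ and $g(N)<\ell N$ for all sufficiently large $N$. Let $\beta\in(1/2,1)$, $\sigma\ge11$, $h=16\sigma/(1-\beta)$. Metropolis–Hastings random walk (MHRW): from $i$ move to $i'\in\mathcal N_i$ with probability $\Psi(i,i')=\min\{1/N_i,1/N_{i'}\}$ and stay at $i$ with probability $1-\sum_{k\in\mathcal N_i}\Psi(i,k)$. The walk length $L=O(\log N)$ is chosen so that from any start the position after $L$ steps is at each agent with probability in $[\frac1N-\frac1{N^3},\frac1N+\frac1{N^3}]$. Time is slotted and synchronous. Dissemination: each agent launches $hg(N)$ independent tokens, each to be forwarded $L$ times; each agent stores received tokens with positive remaining length in a FIFO queue and in every slot pops up to $hg(N)$ of them, decrements their remaining length, and forwards each to a node chosen according to $\Psi(i,\cdot)$. *)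

From HB Require Import structures.
From mathcomp Require Import all_boot all_order all_algebra.
From mathcomp Require Import all_classical all_reals all_analysis.
Set Implicit Arguments. Unset Strict Implicit. Unset Printing Implicit Defensive.
Import Order.TTheory GRing.Theory Num.Theory.
Local Open Scope ring_scope.

Section Graph.
Variables (T : finType) (e : rel T).

Definition simple_graph := symmetric e /\ irreflexive e.
Definition graph_connected := forall x y : T, connect e x y.
Definition non_bipartite := ~ exists c : T -> bool, forall x y, e x y -> c x != c y.

Definition nbrs (i : T) : {set T} := [set j | e i j].
Definition deg (i : T) : nat := #|nbrs i|.

Variable R : realType.

Definition Psi (i j : T) : R :=
  if e i j then Num.min (deg i)%:R^-1 (deg j)%:R^-1
  else if i == j then 1 - \sum_(k in nbrs i) Num.min (deg i)%:R^-1 (deg k)%:R^-1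
  else 0.

Fixpoint walkprob (n : nat) (i j : T) : R :=
  if n is n'.+1 then \sum_k Psi i k * walkprob n' k j else (i == j)%:R.

Variables (L M : nat).
(* a token = (owner agent, index among the M tokens launched by the owner) *)
Definition token := (T * 'I_M)%type.
(* a configuration of the randomness: for each token, the sequence of the
   L nodes visited by its MHRW (positions after hops 1..L) *)
Definition config := {ffun token -> L.-tuple T}.

Definition pos (w : config) (t : token) (k : nat) : T :=
  if k is k'.+1 then nth t.1 (w t) k' else t.1.

Definition weight (w : config) : R :=
  \prod_(t : token) \prod_(k < L) Psi (pos w t k) (pos w t k.+1).

Definition Pr (E : pred config) : R := \sum_(w | E w) weight w.

Record state := State { queue : {ffun T -> seq token}; hops : {ffun token -> nat} }.

Definition init_state : state :=
  State [ffun i => [seq (i, m) | m <- enum 'I_M]] [ffun => 0%N].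

(* one synchronous slot: every agent pops up to M tokens from the front of its
   queue, each popped token makes one hop (to the next node of its walk);
   tokens with positive remaining length are appended to the receiver's queue
   (simultaneous arrivals appended in the order of the senders' enumeration,
   then FIFO order at the sender). *)
Definition step (w : config) (s : state) : state :=
  let popped i := take M (queue s i) in
  let moved t := has (fun i => t \in popped i) (enum T) in
  let nh t := if moved t then (hops s t).+1 else hops s t in
  State
    [ffun j => drop M (queue s j) ++
       flatten [seq [seq t <- popped i | (pos w t (nh t) == j) && (nh t < L)%N]
               | i <- enum T]]
    [ffun t => nh t].

Definition all_done (s : state) : bool := [forall t : token, hops s t == L].

End Graph.

From Pilot Require Import Defs.
From HB Require Import structures.
From mathcomp Require Import all_boot all_order all_algebra.
From mathcomp Require Import all_classical all_reals all_analysis.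
From mathcomp Require Import zify ring lra.
Import Order.TTheory GRing.Theory Num.Theory.
Set Implicit Arguments. Unset Strict Implicit.

(* Fix a node j and let V_j count the visits to j among the positions 0, ..., L-1 of all the
   walks.  The MHRW matrix is doubly stochastic, so E V_j = M L; since one walk visits j at
   most L times, the exponential moment of V_j / (2L) factorises over the independent walks
   and is at most e^M, whence Pr (V_j > 4ML) <= e^(-M) and, by the union bound,
   Pr (some V_j > 4ML) <= N e^(-M) <= N^(1-h) <= N^(-h/3).
   When every V_j <= 4ML the dissemination ends deterministically: a token that is not
   forwarded in a slot waits at a node whose queue holds at least M tokens, and each such
   slot of node j consumes M of the at most 4ML visits still pending at j, so j is congested
   during at most 4L slots; hence every token finishes within L + L * 4L = O(log^2 N) slots.
   Finally, the position of a token after L hops is distributed as the L-step MHRW. *)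

Lemma sum_count_mem (T : finType) (s : seq T) : (\sum_x count_mem x s)%N = size s.
Proof.
elim: s => [|y s IH] /=; first by rewrite big1.
rewrite big_split /= IH (bigD1 y) //= eqxx big1 // => x /negbTE.
by rewrite eq_sym => ->.
Qed.

Lemma count_mem_filter (X : eqType) (P : pred X) (x : X) (s : seq X) :
  count_mem x [seq y <- s | P y] = (P x * count_mem x s)%N.
Proof.
rewrite count_filter.
case: (boolP (P x)) => Px; [rewrite mul1n | rewrite mul0n -(count_pred0 s)];
  by apply: eq_count => y /=; case: eqP => // ->; rewrite ?Px ?(negbTE Px).
Qed.

Section Dissemination.
Variables (T : finType) (L M : nat) (w : config T L M).

Local Notation popped s i := (take M (queue s i)).
Local Notation here s t := (pos w t (hops s t)).

Definition consistent (s : state T M) :=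
  (forall t, hops s t <= L)%N /\
  (forall t j, count_mem t (queue s j) = (hops s t < L) && (here s t == j) :> nat).

Lemma consistent_init : (0 < L)%N -> consistent (init_state T M).
Proof.
move=> L_gt0; split=> [t|[i m] j]; rewrite !ffunE //= L_gt0 count_map /=.
have [<-|ij] := eqVneq i j.
  rewrite (eq_count (a2 := pred1 m)) => [|m'] /=; last by rewrite xpair_eqE eqxx.
  by rewrite count_uniq_mem ?enum_uniq ?mem_enum.
rewrite (eq_count (a2 := pred0)) ?count_pred0 // => m' /=.
by rewrite xpair_eqE [j == i]eq_sym (negbTE ij).
Qed.

Lemma queue_step s j : queue (step w s) j = drop M (queue s j) ++
  flatten [seq [seq t <- popped s i |
     (pos w t (hops (step w s) t) == j) && (hops (step w s) t < L)] | i <- enum T].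
Proof.
rewrite /step /= ffunE; congr (_ ++ flatten _); apply: eq_map => i.
by apply: eq_filter => t; rewrite ffunE.
Qed.

Definition congested (j : T) (s : state T M) : bool := (M <= size (queue s j))%N.

Section Step.
Variable s : state T M.
Hypothesis queue_s : forall t j,
  count_mem t (queue s j) = (hops s t < L) && (here s t == j) :> nat.

Lemma count_popped t i : count_mem t (popped s i) = (t \in popped s i).
Proof.
have := count_cat (pred1 t) (popped s i) (drop M (queue s i)).
rewrite cat_take_drop queue_s -has_pred1 has_count; lia.
Qed.

Lemma mem_popped {t i} : t \in popped s i -> (hops s t < L) && (here s t == i).
Proof. by move/(mem_take)/count_memPn; rewrite queue_s; case: (_ && _). Qed.

Lemma hops_step t : hops (step w s) t = (hops s t + (t \in popped s (here s t)))%N.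
Proof.
rewrite /step /= ffunE; case: hasP => [[i _ ti]|nomove].
  have /andP[_ /eqP ->] := mem_popped ti.
  by rewrite ti addn1.
have [ti|_] := boolP (t \in popped s (here s t)); last by rewrite addn0.
by case: nomove; exists (here s t); rewrite ?mem_enum.
Qed.

Lemma consistent_step : (forall t, hops s t <= L)%N -> consistent (step w s).
Proof.
move=> hops_s; split=> [t|t j].
  rewrite hops_step; case: (boolP (t \in _)) => [/mem_popped/andP[hL _]|_].
    by rewrite addn1.
  by rewrite addn0 hops_s.
have popped_t i : (t \in popped s i) = (t \in popped s (here s t)) && (here s t == i).
  apply/idP/andP => [ti|[ti /eqP <-//]].
  by have /andP[_ /eqP here_i] := mem_popped ti; rewrite here_i.
rewrite queue_step count_cat count_flatten sumnE !big_map -enumT big_enum.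
under eq_bigr do rewrite count_mem_filter count_popped popped_t.
rewrite (bigD1 (here s t)) //= eqxx andbT big1 ?addn0 => [|i /negbTE]; last first.
  by rewrite eq_sym => ->; rewrite andbF muln0.
have := count_cat (pred1 t) (popped s j) (drop M (queue s j)).
rewrite cat_take_drop count_popped popped_t queue_s hops_step.
case: (boolP (t \in _)) => [/mem_popped/andP[-> _]|_] /=.
  by rewrite addn1 muln1 andbC; lia.
by rewrite !addn0 muln0 addn0 => ->.
Qed.

Lemma pending_token_step t j :
  (\sum_(k < L) ((pos w t k == j) && (hops (step w s) t <= k))
     + (t \in popped s j) <= \sum_(k < L) ((pos w t k == j) && (hops s t <= k)))%N.
Proof.
rewrite hops_step; case: (boolP (t \in popped s j)) => [tj|_]; last first.
  by rewrite addn0; apply: leq_sum => k _; lia.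
have /andP[hL /eqP here_j] := mem_popped tj.
rewrite here_j tj addn1 (bigD1 (Ordinal hL)) //= [leqRHS](bigD1 (Ordinal hL)) //=.
rewrite here_j eqxx addn1 ltnn leqnn add0n add1n ltnS.
by apply: leq_sum => k _; lia.
Qed.

Lemma congested_of_waiting t : (hops s t < L)%N ->
  t \notin popped s (here s t) -> congested (here s t) s.
Proof.
move=> hL; apply: contraNT; rewrite -ltnNge => /ltnW/take_oversize ->.
by rewrite -has_pred1 has_count queue_s hL eqxx.
Qed.

End Step.

Definition pending (j : T) (s : state T M) : nat :=
  \sum_t \sum_(k < L) ((pos w t k == j) && (hops s t <= k)).

Definition visits (j : T) : nat := \sum_t \sum_(k < L) (pos w t k == j).

Lemma pending_step s j : consistent s ->
  (pending j (step w s) + M * congested j s <= pending j s)%N.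
Proof.
move=> [_ queue_s].
apply: leq_trans (_ : pending j (step w s) + \sum_t count_mem t (popped s j) <= _)%N.
  rewrite leq_add2l sum_count_mem size_take /congested.
  by case: (boolP (M <= size (queue s j))) => hM; rewrite ?muln0 ?muln1 //; case: ifP.
rewrite /pending -big_split; apply: leq_sum => t _.
by rewrite count_popped //; apply: pending_token_step.
Qed.

Definition state_at n := iter n (step w) (init_state T M).

Hypothesis L_gt0 : (0 < L)%N.

Lemma consistent_state_at n : consistent (state_at n).
Proof.
elim: n => [|n [hops_n queue_n]]; first exact: consistent_init.
exact: consistent_step.
Qed.

Lemma congested_slots_le j d n : (visits j <= M * d)%N -> (0 < M)%N ->
  (\sum_(m < n) congested j (state_at m) <= d)%N.
Proof.
move=> visits_j M_gt0; rewrite -(leq_pmul2l M_gt0); apply: leq_trans visits_j.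
have pending0 : (pending j (state_at 0) <= visits j)%N.
  by apply: leq_sum => t _; apply: leq_sum => k _; case: (_ == j); rewrite ?leq_b1.
apply: leq_trans pending0.
suff : (M * \sum_(m < n) congested j (state_at m) + pending j (state_at n)
         <= pending j (state_at 0))%N by apply: leq_trans; apply: leq_addr.
elim: n => [|n IH]; first by rewrite big_ord0 muln0.
rewrite big_ord_recr mulnDr /= -addnA; apply: leq_trans IH; rewrite leq_add2l addnC.
exact: pending_step (consistent_state_at n).
Qed.

Lemma slots_le_hops_delays t n : (hops (state_at n) t < L)%N ->
  (n <= hops (state_at n) t + \sum_(k < L) \sum_(m < n) congested (pos w t k) (state_at m))%N.
Proof.
elim: n => [//|n IH]; have [_ queue_n] := consistent_state_at n.
rewrite [state_at n.+1]/state_at iterS -/(state_at n) hops_step //.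
have -> : (\sum_(k < L) \sum_(m < n.+1) congested (pos w t k) (state_at m) =
    \sum_(k < L) \sum_(m < n) congested (pos w t k) (state_at m)
    + \sum_(k < L) congested (pos w t k) (state_at n))%N.
  by rewrite -big_split; apply: eq_bigr => k _; rewrite big_ord_recr.
case: (boolP (t \in _)) => [_|waiting] hL.
  by have := IH (leq_ltn_trans (leq_addr _ _) hL); lia.
rewrite addn0 in hL *; have := congested_of_waiting queue_n hL waiting.
rewrite addnA -addn1 => here_congested; apply: leq_add; first exact: IH.
by rewrite (bigD1 (Ordinal hL)) //= here_congested.
Qed.

Theorem all_done_of_visits_le d n : (0 < M)%N ->
  (forall j, visits j <= M * d)%N -> (L * d.+1 <= n)%N -> all_done L (state_at n).
Proof.
move=> M_gt0 visits_le n_ge; apply/forallP => t; have [hops_le _] := consistent_state_at n.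
rewrite eqn_leq hops_le leqNgt /=; apply/negP => /[dup] hL /slots_le_hops_delays.
have delays : (\sum_(k < L) \sum_(m < n) congested (pos w t k) (state_at m) <= L * d)%N.
  rewrite -[X in (_ <= X * d)%N]card_ord -sum_nat_const.
  by apply: leq_sum => k _; apply: congested_slots_le.
lia.
Qed.
End Dissemination.

Local Open Scope ring_scope.

Lemma sum_tupleS (V : nmodType) (T : finType) n (F : n.+1.-tuple T -> V) :
  \sum_p F p = \sum_x \sum_(q : n.-tuple T) F [tuple of x :: q].
Proof.
rewrite pair_big /= (reindex (fun u : T * n.-tuple T => [tuple of u.1 :: u.2])) //=.
exists (fun p : n.+1.-tuple T => (thead p, [tuple of behead p])) => [[x q] _|p _].
  by rewrite theadE; congr pair; apply: val_inj.
by rewrite [in RHS](tuple_eta p); apply: val_inj.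
Qed.

Lemma sum_natr_eq_mul (R : pzSemiRingType) (I : finType) (i : I) (f : I -> R) :
  \sum_j (i == j)%:R * f j = f i.
Proof.
rewrite (bigD1 i) //= eqxx mul1r big1 ?addr0 // => j /negbTE.
by rewrite eq_sym => ->; rewrite mul0r.
Qed.

Lemma expR_le1D2x (R : realType) (x : R) : 0 <= x -> x <= 2^-1 -> expR x <= 1 + 2 * x.
Proof.
move=> x_ge0 x_le; have := expR_ge1Dx (- x); have := expR_gt0 x.
have : expR x * expR (- x) = 1 by rewrite -expRD subrr expR0.
nra.
Qed.

Lemma ln_natr_ge0 (R : realType) (n : nat) : 0 <= ln (n%:R : R).
Proof. by case: n => [|n]; [rewrite ln0 | apply: ln_ge0; rewrite ler1n]. Qed.

Lemma natr_mul_expRN_le (R : realType) (n : nat) (a m : R) :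
  3 / 2 <= a -> a * ln n%:R <= m -> n%:R * expR (- m) <= (n%:R `^ (a / 3))^-1.
Proof.
move=> a_ge am; have [->|n_gt0] := posnP n; first by rewrite mul0r invr_ge0 powR_ge0.
have n_gt0R : (0 : R) < n%:R by rewrite ltr0n.
rewrite /powR gt_eqF // -expRN -{1}(lnK n_gt0R) -expRD ler_expR.
by have := ln_natr_ge0 R n; nra.
Qed.

Lemma slots_le_truncn (R : realType) (L : nat) (c x : R) : (0 < L)%N -> L%:R <= c * x ->
  (L * (4 * L).+1 <= Num.truncn ((5 * c ^+ 2 + 1) * x ^+ 2))%N.
Proof.
move=> L_gt0 L_le; have L_ge1 : (1 : R) <= L%:R by rewrite ler1n.
have := sqr_ge0 c; have := sqr_ge0 x; rewrite !expr2 => x2_ge0 c2_ge0.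
rewrite truncn_ge_nat; last by nra.
rewrite -addn1 natrM natrD natrM; nra.
Qed.

Section MetropolisHastings.
Variables (T : finType) (e : rel T) (R : realType).
Hypotheses (e_sym : symmetric e) (e_irr : irreflexive e).

Local Notation Psi := (Psi e R).
Local Notation walkprob := (walkprob e R).

Lemma Psi_ge0 i j : 0 <= Psi i j.
Proof.
rewrite /Psi; case: (e i j); first by rewrite le_min !invr_ge0 !ler0n.
case: eqP => // _; rewrite subr_ge0.
apply: le_trans (_ : \sum_(k in nbrs e i) (deg e i)%:R^-1 <= 1).
  by apply: ler_sum => k _; rewrite ge_min lexx.
rewrite sumr_const /deg; case: #|_| => [|n]; first by rewrite mulr0n.
by rewrite -[_ *+ n.+1]mulr_natl mulfV ?pnatr_eq0.
Qed.

Lemma sum_Psi_row i : \sum_j Psi i j = 1.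
Proof.
rewrite (bigID (e i)) /= [X in _ + X](bigD1 i) ?e_irr //=.
rewrite [X in Psi i i + X]big1 ?addr0; last first.
  by move=> j /andP[/negbTE eij /negbTE ij]; rewrite /Defs.Psi eij eq_sym ij.
have -> : \sum_(j | e i j) Psi i j =
          \sum_(j in nbrs e i) Num.min (deg e i)%:R^-1 (deg e j)%:R^-1.
  by apply: eq_big => [j|j eij]; rewrite /Defs.Psi ?eij // /nbrs inE.
by rewrite [Psi i i]/Defs.Psi e_irr eqxx addrC subrK.
Qed.

Lemma Psi_sym i j : Psi i j = Psi j i.
Proof.
rewrite /Defs.Psi e_sym eq_sym; case: (e j i); first by rewrite minC.
by case: eqP => // ->.
Qed.

Lemma sum_Psi_col j : \sum_i Psi i j = 1.
Proof. by rewrite -(sum_Psi_row j); apply: eq_bigr => i _; rewrite Psi_sym. Qed.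

Lemma sum_walkprob_col k j : \sum_i walkprob k i j = 1.
Proof.
elim: k j => [|k IH] j /=.
  by rewrite (bigD1 j) //= eqxx big1 ?addr0 // => i /negbTE ->.
rewrite exchange_big /= -(IH j); apply: eq_bigr => m _.
by rewrite -mulr_suml sum_Psi_col mul1r.
Qed.

Definition path_pos n (i : T) (p : n.-tuple T) (k : nat) : T :=
  if k is k'.+1 then nth i p k' else i.

Definition path_weight n (i : T) (p : n.-tuple T) : R :=
  \prod_(k < n) Psi (path_pos i p k) (path_pos i p k.+1).

Lemma path_weight_ge0 n i (p : n.-tuple T) : 0 <= path_weight i p.
Proof. by apply: prodr_ge0 => k _; apply: Psi_ge0. Qed.

Lemma path_pos_cons n i x (q : n.-tuple T) k : (k <= n)%N ->
  path_pos i [tuple of x :: q] k.+1 = path_pos x q k.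
Proof. by case: k => [|k] //= k_lt; apply: set_nth_default; rewrite size_tuple. Qed.

Lemma path_weight_cons n i x (q : n.-tuple T) :
  path_weight i [tuple of x :: q] = Psi i x * path_weight x q.
Proof.
rewrite /path_weight big_ord_recl; congr (_ * _); apply: eq_bigr => k _.
by rewrite lift0 !path_pos_cons // ltnW.
Qed.

Lemma sum_path_weight n i : \sum_(q : n.-tuple T) path_weight i q = 1.
Proof.
elim: n i => [|n IH] i.
  rewrite (big_pred1 [tuple]) => [|q]; last by rewrite [q]tuple0 /= eqxx.
  by rewrite /path_weight big_ord0.
rewrite sum_tupleS -[RHS](sum_Psi_row i); apply: eq_bigr => x _.
by under eq_bigr do rewrite path_weight_cons; rewrite -mulr_sumr IH mulr1.
Qed.

Lemma sum_path_weight_pos n i k (f : T -> R) : (k <= n)%N ->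
  \sum_(q : n.-tuple T) path_weight i q * f (path_pos i q k) = \sum_j walkprob k i j * f j.
Proof.
have pos0 m x : \sum_(q : m.-tuple T) path_weight x q * f (path_pos x q 0) =
                \sum_j walkprob 0 x j * f j.
  by rewrite /= -mulr_suml sum_path_weight mul1r sum_natr_eq_mul.
elim: n i k => [|n IH] i [|k] k_le; rewrite ?pos0 // sum_tupleS.
under eq_bigr do under eq_bigr do rewrite path_weight_cons path_pos_cons // -mulrA.
under eq_bigr do rewrite -mulr_sumr IH //.
under eq_bigr do rewrite mulr_sumr.
rewrite exchange_big /=; apply: eq_bigr => j _.
by rewrite mulr_suml; apply: eq_bigr => x _; rewrite mulrA.
Qed.

Lemma sum_path_weight_pos_eq n i k j : (k <= n)%N ->
  \sum_(q : n.-tuple T) path_weight i q * (path_pos i q k == j)%:R = walkprob k i j.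
Proof.
move=> k_le; rewrite (sum_path_weight_pos i (fun x => (x == j)%:R)) //.
by rewrite (bigD1 j) //= eqxx mulr1 big1 ?addr0 // => x /negbTE ->; rewrite mulr0.
Qed.

Lemma card_le1_of_walkprob0 :
  (forall i j : T, `|walkprob 0 i j - #|T|%:R^-1| <= (#|T|%:R ^+ 3)^-1) -> (#|T| <= 1)%N.
Proof.
move=> near_unif; rewrite leqNgt; apply/negP => card_gt1.
have [i _] : exists i : T, i \in T by apply/card_gt0P; apply: ltnW.
have := near_unif i i; rewrite /= eqxx mulr1n -exprVn.
set u := #|T|%:R^-1; have u_gt0 : 0 < u by rewrite invr_gt0 ltr0n ltnW.
have u_le : u <= 2^-1 by rewrite lef_pV2 ?posrE ?ltr0n ?ler_nat // ltnW.
rewrite ger0_norm ?subr_ge0 ?(le_trans u_le) ?invf_le1 ?ler1n //.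
by rewrite !exprS expr0 mulr1; nra.
Qed.

Variables (L M : nat).
Local Notation Pr := (Pr e R (L := L) (M := M)).

Lemma weight_ge0 (w : config T L M) : 0 <= weight e R w.
Proof. by apply: prodr_ge0 => t _; apply: path_weight_ge0. Qed.

Lemma sum_weight_prod (F : token T M -> L.-tuple T -> R) :
  \sum_(w : config T L M) weight e R w * \prod_t F t (w t) =
  \prod_t \sum_p path_weight t.1 p * F t p.
Proof. by rewrite bigA_distr_bigA; apply: eq_bigr => w _; rewrite big_split. Qed.

Lemma sum_weight : \sum_(w : config T L M) weight e R w = 1.
Proof.
transitivity (\prod_(t : token T M) \sum_(p : L.-tuple T) path_weight t.1 p * 1).
  by rewrite -sum_weight_prod; apply: eq_bigr => w _; rewrite big1_eq mulr1.
by apply: big1 => t _; under eq_bigr do rewrite mulr1; apply: sum_path_weight.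
Qed.

Lemma Pr_eq1 (E : pred (config T L M)) : (forall w, E w) -> Pr E = 1.
Proof. by move=> E_all; rewrite /Pr (eq_bigl predT) ?sum_weight. Qed.

Lemma Pr_predC (E : pred (config T L M)) : Pr (fun w => ~~ E w) = 1 - Pr E.
Proof. by rewrite /Pr -sum_weight [X in _ = X - _](bigID E) /= addrAC subrr add0r. Qed.

Lemma Pr_le_sum (I : finType) (E : pred (config T L M)) (F : I -> pred (config T L M)) :
  (forall w, E w -> exists i, F i w) -> Pr E <= \sum_i Pr (F i).
Proof.
move=> cover; apply: le_trans (_ : \sum_w \sum_(i | F i w) weight e R w <= _).
  rewrite /Pr [leRHS](bigID E) /= ler_wpDr ?sumr_ge0 // => [w _|].
    by apply: sumr_ge0 => i _; apply: weight_ge0.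
  apply: ler_sum => w /cover [i Fi]; rewrite (bigD1 i) //= ler_wpDr //.
  by apply: sumr_ge0 => j _; apply: weight_ge0.
by rewrite (exchange_big_dep xpredT).
Qed.

Lemma Pr_pos t k j : (k <= L)%N -> Pr (fun w => pos w t k == j) = walkprob k t.1 j.
Proof.
move=> k_le; transitivity (\prod_t' \sum_(p : L.-tuple T) path_weight t'.1 p *
    (if t' == t then (path_pos t'.1 p k == j)%:R else 1)).
  rewrite -sum_weight_prod /Pr big_mkcond /=; apply: eq_bigr => w _.
  rewrite (bigD1 t) //= eqxx big1 ?mulr1 => [|t' /negbTE -> //].
  by case: (pos w t k == j); rewrite ?mulr1 ?mulr0.
rewrite (bigD1 t) //= eqxx sum_path_weight_pos_eq // big1 ?mulr1 // => t' /negbTE ->.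
by under eq_bigr do rewrite mulr1; apply: sum_path_weight.
Qed.

Lemma Pr_gt_le_mgf (X : config T L M -> R) (a c : R) : 0 <= c ->
  Pr (fun w => a < X w) <= (\sum_w weight e R w * expR (c * X w)) * expR (- (c * a)).
Proof.
move=> c_ge0; rewrite mulr_suml [leRHS](bigID (fun w => a < X w)) /=.
rewrite ler_wpDr ?sumr_ge0 // => [w _|]; first by rewrite !mulr_ge0 ?weight_ge0 ?expR_ge0.
apply: ler_sum => w aX; rewrite -mulrA -expRD ler_peMr ?weight_ge0 //.
apply: le_trans (expR_ge1Dx _); rewrite lerDl subr_ge0.
by rewrite ler_wpM2l // ltW.
Qed.

Definition path_visits (j i : T) (p : L.-tuple T) : nat :=
  (\sum_(k < L) (path_pos i p k == j))%N.

Lemma mgf_path_visits_le i j : (0 < L)%N ->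
  \sum_p path_weight i p * expR ((2 * L%:R)^-1 * (path_visits j i p)%:R)
    <= expR (L%:R^-1 * \sum_(k < L) walkprob k i j).
Proof.
move=> L_gt0; have L_gt0R : (0 : R) < L%:R by rewrite ltr0n.
apply: le_trans (_ : \sum_p path_weight i p * (1 + L%:R^-1 * (path_visits j i p)%:R) <= _).
  apply: ler_sum => p _; rewrite ler_wpM2l ?path_weight_ge0 //.
  have visits_le : ((path_visits j i p)%:R : R) <= L%:R.
    by rewrite ler_nat -[leqRHS]card_ord -sum1_card; apply: leq_sum => k _; apply: leq_b1.
  rewrite (_ : L%:R^-1 * _ = 2 * ((2 * L%:R)^-1 * (path_visits j i p)%:R)); last by field; lra.
  apply: expR_le1D2x; first by rewrite mulr_ge0 ?invr_ge0 ?ler0n.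
  apply: le_trans (_ : (2 * L%:R)^-1 * L%:R <= _).
    by rewrite ler_wpM2l // invr_ge0 mulr_ge0 // ltW.
  by rewrite invfM -mulrA mulVf ?mulr1 // gt_eqF.
have -> : \sum_p path_weight i p * (1 + L%:R^-1 * (path_visits j i p)%:R) =
    1 + L%:R^-1 * \sum_(k < L) walkprob k i j.
  under eq_bigr do rewrite mulrDr mulr1 mulrCA.
  rewrite big_split /= sum_path_weight -mulr_sumr; congr (1 + L%:R^-1 * _).
  rewrite (eq_bigr (fun p => \sum_(k < L) path_weight i p * (path_pos i p k == j)%:R)).
    rewrite exchange_big /=; apply: eq_bigr => k _.
    exact: sum_path_weight_pos_eq (ltnW (ltn_ord k)).
  by move=> p _; rewrite natr_sum mulr_sumr.
exact: expR_ge1Dx.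
Qed.

Lemma sum_expected_visits j :
  \sum_(t : token T M) \sum_(k < L) walkprob k t.1 j = (M * L)%:R.
Proof.
rewrite -(pair_big predT predT (fun i (m : 'I_M) => \sum_(k < L) walkprob k i j)) /=.
under eq_bigr do rewrite sumr_const card_ord.
rewrite sumrMnl exchange_big /=.
under eq_bigr do rewrite sum_walkprob_col.
by rewrite sumr_const card_ord natrM mulr_natl.
Qed.

Lemma mgf_visits_le j : (0 < L)%N ->
  \sum_(w : config T L M) weight e R w * expR ((2 * L%:R)^-1 * (visits w j)%:R)
    <= expR M%:R.
Proof.
move=> L_gt0.
have -> : \sum_(w : config T L M) weight e R w * expR ((2 * L%:R)^-1 * (visits w j)%:R) =
      \prod_(t : token T M)
      \sum_p path_weight t.1 p * expR ((2 * L%:R)^-1 * (path_visits j t.1 p)%:R).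
  rewrite -sum_weight_prod; apply: eq_bigr => w _.
  by rewrite /visits natr_sum mulr_sumr expR_sum.
apply: le_trans (_ : \prod_(t : token T M) expR (L%:R^-1 * \sum_(k < L) walkprob k t.1 j) <= _).
  apply: ler_prod => t _; rewrite mgf_path_visits_le // andbT.
  by apply: sumr_ge0 => p _; rewrite mulr_ge0 ?path_weight_ge0 ?expR_ge0.
by rewrite -expR_sum -mulr_sumr sum_expected_visits natrM mulrC mulfK // pnatr_eq0 -lt0n.
Qed.

Lemma Pr_visits_gt j : (0 < L)%N ->
  Pr (fun w => M * (4 * L) < visits w j)%N <= expR (- M%:R).
Proof.
move=> L_gt0; have L_gt0R : (0 : R) < L%:R by rewrite ltr0n.
have c_ge0 : (0 : R) <= (2 * L%:R)^-1 by rewrite invr_ge0 mulr_ge0 // ltW.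
have -> : Pr (fun w => M * (4 * L) < visits w j)%N =
          Pr (fun w => (M * (4 * L))%:R < (visits w j)%:R :> R).
  by apply: eq_bigl => w; rewrite ltr_nat.
apply: le_trans (Pr_gt_le_mgf _ _ c_ge0) _.
have -> : (2 * L%:R)^-1 * (M * (4 * L))%:R = 2 * M%:R :> R.
  by rewrite !natrM; field; rewrite pnatr_eq0 -lt0n.
apply: le_trans (_ : expR M%:R * expR (- (2 * M%:R)) <= _).
  by rewrite ler_wpM2r ?expR_ge0 ?mgf_visits_le.
by rewrite -expRD ler_expR; lra.
Qed.

Theorem Pr_all_done_ge K : (0 < L)%N -> (0 < M)%N -> (L * (4 * L).+1 <= K)%N ->
  1 - #|T|%:R * expR (- M%:R) <= Pr (fun w => all_done L (iter K (step w) (init_state T M))).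
Proof.
move=> L_gt0 M_gt0 K_ge.
suff : Pr (fun w => ~~ all_done L (iter K (step w) (init_state T M)))
         <= #|T|%:R * expR (- M%:R) by rewrite Pr_predC; lra.
apply: le_trans (Pr_le_sum (F := fun j w => M * (4 * L) < visits w j)%N _) _.
  move=> w not_done; apply/existsP; apply: contraNT not_done => /existsPn visits_le.
  apply: (all_done_of_visits_le (w := w) L_gt0 M_gt0 _ K_ge) => j.
  by rewrite leqNgt visits_le.
apply: le_trans (ler_sum _ (fun j _ => Pr_visits_gt j L_gt0)) _.
by rewrite sumr_const mulr_natl.
Qed.

End MetropolisHastings.

Theorem lemma1 (R : realType) (g : nat -> R) (beta sigma : R)
  (Hg : forall l : R, 0 < l ->
     exists N0 : nat, forall N : nat, (N0 <= N)%N ->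
       l * ln N%:R < g N /\ g N < l * N%:R)
  (Hbeta : 2^-1 < beta < 1) (Hsigma : 11 <= sigma)
  (c0 : R) (Hc0 : 0 < c0) :
  let h := 16 * sigma / (1 - beta) in
  exists C : R, 0 < C /\
  forall (T : finType) (e : rel T) (L M : nat),
    simple_graph e -> graph_connected e -> non_bipartite e ->
    let N := #|T| in
    ln N%:R < g N ->
    M%:R = h * g N ->
    L%:R <= c0 * ln N%:R ->
    (forall i j : T, `|walkprob e R L i j - N%:R^-1| <= (N%:R ^+ 3)^-1) ->
    Pr e R (fun w : config T L M =>
              all_done L (iter (Num.truncn (C * ln N%:R ^+ 2))
                               (step w) (init_state T M)))
      >= 1 - (N%:R `^ (h / 3))^-1
    /\
    (forall (t : token T M) (j : T),
       `|Pr e R (fun w : config T L M => pos w t L == j) - N%:R^-1|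
         <= (N%:R ^+ 3)^-1).
Proof.
move=> h; have h_ge : 3 / 2 <= h.
  by have /andP[? ?] := Hbeta; rewrite /h ler_pdivlMr ?subr_gt0 //; lra.
clearbody h.
exists (5 * c0 ^+ 2 + 1); split; first by have := sqr_ge0 c0; lra.
move=> T e L M [e_sym e_irr] _ _ N lnN_lt_g M_def L_le mixing.
split; last by move=> t j; rewrite (Pr_pos _ e_irr _ _ (leqnn L)); apply: mixing.
have g_gt0 : 0 < g N := le_lt_trans (ln_natr_ge0 R N) lnN_lt_g.
have M_gt0 : (0 < M)%N by rewrite -(ltr0n R) M_def mulr_gt0 //; lra.
have tail : N%:R * expR (- M%:R) <= (N%:R `^ (h / 3))^-1.
  by apply: (natr_mul_expRN_le h_ge); rewrite M_def ler_pM2l; [exact: ltW | lra].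
have [L0|L_gt0] := posnP L; last first.
  apply: le_trans _ (Pr_all_done_ge _ e_sym e_irr L_gt0 M_gt0 _).
    by rewrite lerD2l lerN2 tail.
  exact: slots_le_truncn L_gt0 L_le.
(* with L = 0 the mixing hypothesis forces N <= 1, so that no slot is run at all *)
subst L; have lnN0 : ln N%:R = 0 :> R.
  move: (card_le1_of_walkprob0 mixing); rewrite /N; move: #|T| => [|[|]] // _.
    by rewrite ln0.
  by rewrite ln1.
rewrite Pr_eq1 ?lerBlDr ?lerDl ?invr_ge0 ?powR_ge0 // => w.
by rewrite lnN0 expr0n mulr0 truncn0 /=; apply/forallP => t; rewrite ffunE.
Qed.
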